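(* Let $I\subseteq R$ be a good ideal. Then there exist finitely many pairwise disjoint cones in $\mathbb N^n$ whose union is $\mathbb N^n$ such that for each of these cones $C$ and all $a,b\in C$ one has $I_a=I_b$.
   Context: Let $\mathbb K$ be a field, $R=\mathbb K[x_1,\dots,x_n]$, $\mathfrak m=\langle x_1,\dots,x_n\rangle$, $\mathbb N=\{0,1,2,\dots\}$. A monomial $x_1^{\alpha_1}\cdots x_n^{\alpha_n}$ is identified with the point $(\alpha_1,\dots,\alpha_n)\in\mathbb N^n$. For a monomial ideal $I$, $G(I)$ denotes its (unique) minimal monomial generating set. If $I$ is an $\mathfrak m$-primary monomial ideal, then for each $i$ there is a unique $d_i\ge1$ with $x_i^{d_i}\in G(I)$; write $\mu_i=x_i^{d_i}$. For $(a_1,\dots,a_n)\in\mathbb N^n$ the box associated to $I$ is $B_{a_1,\dots,a_n}=([a_1d_1,(a_1+1)d_1]\times\cdots\times[a_nd_n,(a_n+1)d_n])\cap\mathbb N^n$; a monomial belongs to a box if its exponent vector does. An $\mathfrak m$-primary monomial ideal $I$ is called good if for every integer $l\ge1$, every element of $G(I^l)$ belongs to some box $B_{a_1,\dots,a_n}$ with $a_1+\dots+a_n=l-1$. For a good ideal $I$ and $a=(a_1,\dots,a_n)\in\mathbb N^n$, with $l=a_1+\dots+a_n+1$, define $I_{a}=I_{a_1,\dots,a_n}=\left\langle \frac{m}{\mu_1^{a_1}\cdots\mu_n^{a_n}} : m\in B_{a_1,\dots,a_n}\cap G(I^l)\right\rangle$. For $v\in\mathbb N^n$ and $S\subseteq\{1,\dots,n\}$,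 the cone with vertex $v$ and set of fixed coordinates $S$ is $\{c\in\mathbb N^n : c_i=v_i \text{ for } i\in S,\ c_i\ge v_i \text{ for } i\notin S\}$; its dimension is $n-|S|$. *)

(* Monomial ideals of K[x_1..x_n] are represented by their
   sets of exponent vectors (up-closed subsets of N^n). *)
From mathcomp Require Import all_boot.
Set Implicit Arguments. Unset Strict Implicit. Unset Printing Implicit Defensive.

Definition expv (n : nat) := 'I_n -> nat.

(* componentwise order = divisibility of monomials *)
Definition leV n (a b : expv n) : Prop := forall i, a i <= b i.

Definition zeroV n : expv n := fun _ => 0.

(* exponent vector of x_i^d *)
Definition powV n (i : 'I_n) (d : nat) : expv n := fun j => if j == i then d else 0.

Definition is_monideal n (I : expv n -> Prop) : Prop :=
  forall a b, I a -> leV a b -> I b.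

(* monomial set of the product ideal I^l (I^0 = R) *)
Fixpoint powI n (I : expv n -> Prop) (l : nat) : expv n -> Prop :=
  match l with
  | 0 => fun _ => True
  | l'.+1 => fun b => exists x y, I x /\ powI I l' y /\ leV (fun i => x i + y i) b
  end.

(* m belongs to G(I), the minimal monomial generating set *)
Definition mingen n (I : expv n -> Prop) (m : expv n) : Prop :=
  I m /\ forall b, I b -> leV b m -> leV m b.

Definition m_primary {n} (I : expv n -> Prop) : Prop :=
  is_monideal I /\ ~ I (@zeroV n) /\ forall i : 'I_n, exists d, I (powV i d).

(* d i is the exponent with x_i^{d_i} in G(I), d_i >= 1 *)
Definition gen_exponents n (I : expv n -> Prop) (d : expv n) : Prop :=
  forall i : 'I_n, 0 < d i /\ mingen I (powV i (d i)).

Definition inbox n (d a m : expv n) : Prop :=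
  forall i, a i * d i <= m i <= (a i).+1 * d i.

Definition sumV n (a : expv n) : nat := \sum_(i < n) a i.

Definition good n (I : expv n -> Prop) (d : expv n) : Prop :=
  m_primary I /\ gen_exponents I d /\
  forall l, 0 < l -> forall m, mingen (powI I l) m ->
    exists a : expv n, sumV a = l.-1 /\ inbox d a m.

(* monomial set of I_a: ideal generated by m / mu^a, m in B_a ∩ G(I^l) *)
Definition Ia n (I : expv n -> Prop) (d a : expv n) : expv n -> Prop :=
  fun c => exists m, inbox d a m /\ mingen (powI I (sumV a).+1) m /\
                     leV (fun i => m i - a i * d i) c.

(* cone with vertex v and set of fixed coordinates S *)
Definition cone n (v : expv n) (S : {set 'I_n}) (c : expv n) : Prop :=
  forall i, (i \in S -> c i = v i) /\ (i \notin S -> v i <= c i).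

From mathcomp Require Import all_boot zify.
From Stdlib Require Import Classical FunctionalExtensionality.
Set Implicit Arguments. Unset Strict Implicit. Unset Printing Implicit Defensive.

(* Monomials are points of N^n, I_a is described by its set of monomials, and
   mu^b denotes x_1^(b_1 d_1) ... x_n^(b_n d_n).  The proof has three parts.
   1. Monotonicity: I_a is contained in I_(a+e_i), hence I_a grows with a
      (lemmas mingen_step_corner, Ia_step, Ia_mono).  A generator of I_a comes from m in B_a; a minimal
      generator z of I^(l+1) below x_i^(d_i) m lies above mu^(a+e_i).  This
      uses the weight W(y) = prod_j d_j * sum_i y_i / d_i: goodness forces
      every monomial of I^L to have weight at least L prod_j d_j, so mu^b is a
      minimal element of I^|b| (lemma mu_minimal).
   2. Finiteness: I_a is generated inside the box [0, d] (lemma Ia_trunc), so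
      only finitely many memberships matter.  By Dickson's lemma, in the form
      "upward closed sets are stable under truncating coordinates at a uniform
      level" (lemma dickson_clamp), I_a = I_min(a, M) for some M (Ia_clamp).
   3. Geometry: the points with a given truncation min(a, M) = u form the cone
      with vertex u whose fixed coordinates are those with u_i < M; these
      (M+1)^n cones partition N^n (clamp_cone_decomposition). *)

Section Vectors.
Variable n : nat.
Implicit Types (a b c x y z : expv n) (i p : 'I_n).

Definition addV x y : expv n := fun i => x i + y i.

Definition unitV p : expv n := fun j => (j == p).

Definition decV x p : expv n := fun j => x j - (j == p).

Definition clampV x (M : nat) : expv n := fun i => minn (x i) M.

Lemma leV_trans y x z : leV x y -> leV y z -> leV x z.
Proof. by move=> Hxy Hyz i; apply: leq_trans (Hxy i) (Hyz i). Qed.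

Lemma leV_anti x y : leV x y -> leV y x -> x = y.
Proof.
by move=> Hxy Hyx; apply: functional_extensionality => i; apply/eqP; rewrite eqn_leq Hxy Hyx.
Qed.

Lemma leV_clamp x M : leV (clampV x M) x.
Proof. by move=> i; apply: geq_minl. Qed.

Lemma sum_ltn (f g : 'I_n -> nat) k : (forall i, f i <= g i) -> f k < g k ->
  \sum_i f i < \sum_i g i.
Proof.
move=> Hfg Hk; rewrite (bigD1 k) //= [X in _ < X](bigD1 k) //= -addSn.
by apply: leq_add => //; apply: leq_sum => i _.
Qed.

Lemma sumV_ltn x y k : leV x y -> x k < y k -> sumV x < sumV y.
Proof. exact: sum_ltn. Qed.

Lemma leq_sumV x i : x i <= sumV x.
Proof. by rewrite /sumV (bigD1 i) //= leq_addr. Qed.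

Lemma sumV_addunit x p : sumV (addV x (unitV p)) = (sumV x).+1.
Proof.
rewrite /sumV /addV big_split /= -addn1; congr (_ + _).
by rewrite (bigD1 p) //= /unitV eqxx big1 // => j /negbTE ->.
Qed.

Lemma decV_addunit x p : 0 < x p -> addV (decV x p) (unitV p) = x.
Proof.
move=> Hp; apply: functional_extensionality => j; rewrite /addV /decV /unitV.
by case: (eqVneq j p) => [->|_] /=; lia.
Qed.

Lemma sumV_pos x : 0 < sumV x -> exists p, 0 < x p.
Proof.
move=> Hx; apply: NNPP => Hno; move: Hx; rewrite /sumV big1 // => i _.
by apply/eqP; rewrite -leqn0 leqNgt; apply/negP => Hi; apply: Hno; exists i.
Qed.

Lemma not_leV x y : ~ leV x y -> exists i, y i < x i.
Proof.
move=> Hxy; apply: NNPP => Hno; apply: Hxy => i.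
by rewrite leqNgt; apply/negP => Hi; apply: Hno; exists i.
Qed.

Lemma leV_sumV_eq x y : leV x y -> sumV y <= sumV x -> leV y x.
Proof.
move=> Hxy Hs; apply: NNPP => /not_leV [k Hk].
by have := sumV_ltn Hxy Hk; lia.
Qed.

Lemma exists_mingen (Q : expv n -> Prop) x : Q x -> exists m, mingen Q m /\ leV m x.
Proof.
elim: {x}(sumV x) {-2}x (leqnn (sumV x)) => [|N IH] x Hs Qx.
  exists x; split=> //; split=> // b _ _ i.
  by have := leq_trans (leq_sumV x i) Hs; rewrite leqn0 => /eqP ->.
case: (classic (forall b, Q b -> leV b x -> leV x b)) => [Hmin|].
  by exists x; split.
move=> /not_all_ex_not [b Hb].
have [Qb Hb'] := imply_to_and _ _ Hb.
have [Hbx Hxb] := imply_to_and _ _ Hb'.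
have [i Hi] := not_leV Hxb.
have [m [Hm Hmb]] := IH b (leq_trans (sumV_ltn Hbx Hi) Hs) Qb.
by exists m; split=> //; apply: leV_trans Hbx.
Qed.

Lemma leV_ind (P : expv n -> Prop) :
  (forall a p, P a -> P (addV a (unitV p))) -> forall a b, leV a b -> P a -> P b.
Proof.
move=> Hstep a b; elim: {b}(sumV b) {-2}b (leqnn (sumV b)) => [|N IH] b Hs Hab Pa.
  suff <- : a = b by [].
  by apply: leV_anti => // i; have := leq_trans (leq_sumV b i) Hs; lia.
case: (classic (leV b a)) => [Hba|/not_leV [p Hp]].
  by rewrite -(leV_anti Hab Hba).
have Hbp : 0 < b p by lia.
rewrite -(decV_addunit Hbp); apply: Hstep; apply: IH Pa.
- by have := sumV_addunit (decV b p) p; rewrite decV_addunit //; lia.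
- by move=> j; rewrite /decV; case: (eqVneq j p) => [->|_] /=; [lia | rewrite subn0].
Qed.

End Vectors.

Definition boxed n (I : expv n -> Prop) (d : expv n) : Prop :=
  forall l, 0 < l -> forall m, mingen (powI I l) m ->
    exists a : expv n, sumV a = l.-1 /\ inbox d a m.

Section Powers.
Variable n : nat.
Variable I : expv n -> Prop.
Implicit Types (a b x y : expv n).

Definition muV (d b : expv n) : expv n := fun i => b i * d i.

Definition scaleV N (g : expv n) : expv n := fun i => N * g i.

Lemma powI_up L y y' : powI I L y -> leV y y' -> powI I L y'.
Proof.
case: L => [//|L] [x [z [Ix [Iz Hle]]]] Hyy'.
by exists x, z; split=> //; split=> //; apply: leV_trans Hle Hyy'.
Qed.

Lemma powI_mul L x y : I x -> powI I L y -> powI I L.+1 (addV x y).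
Proof. by move=> Ix Iy; exists x, y; split=> //; split. Qed.

Lemma powI_scale N g : I g -> powI I N (scaleV N g).
Proof.
move=> Ig; elim: N => [//|N IH]; exists g, (scaleV N g).
by split=> //; split=> // i; rewrite /scaleV mulSn.
Qed.

Lemma powI_mu (d : expv n) : (forall i, I (powV i (d i))) ->
  forall b, powI I (sumV b) (muV d b).
Proof.
move=> Imu b; move: {2 3}(sumV b) (erefl (sumV b)) => N; elim: N b => [//|N IH] b Hb.
have [p Hp] : exists p, 0 < b p by apply: sumV_pos; rewrite Hb.
have Hdec : sumV (decV b p) = N.
  by apply/eqP; rewrite -eqSS -Hb -{2}(decV_addunit Hp) sumV_addunit.
apply: (powI_up (powI_mul (Imu p) (IH _ Hdec))) => j.
rewrite /addV /powV /muV /decV; case: (eqVneq j p) => [->|_] /=; nia.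
Qed.

End Powers.

Section Weight.
Variable n : nat.
Variable I : expv n -> Prop.
Variable d : expv n.
Hypothesis d_pos : forall i, 0 < d i.
Implicit Types (a b x y z : expv n).

(* The weighted degree W(y) = D * sum_i y_i / d_i with D = prod_i d_i; it is
   the linear form for which every mu^b with |b| = L has weight L * D. *)
Definition prodd : nat := \prod_(j < n) d j.
Definition weight_of (i : 'I_n) : nat := \prod_(j < n | j != i) d j.
Definition W y : nat := \sum_i y i * weight_of i.

Lemma W_add x y : W (addV x y) = W x + W y.
Proof. by rewrite /W -big_split; apply: eq_bigr => i _; rewrite mulnDl. Qed.

Lemma W_le x y : leV x y -> W x <= W y.
Proof. by move=> Hxy; apply: leq_sum => i _; rewrite leq_mul2r Hxy orbT. Qed.

Lemma W_ltn x y k : leV x y -> x k < y k -> W x < W y.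
Proof.
move=> Hxy Hk; apply: (sum_ltn (k := k)) => [i|]; first by rewrite leq_mul2r Hxy orbT.
by rewrite ltn_pmul2r // prodn_gt0.
Qed.

Lemma W_mu b : W (muV d b) = prodd * sumV b.
Proof.
rewrite /W /sumV big_distrr; apply: eq_bigr => i _.
by rewrite /muV -mulnA /prodd (bigD1 i) //= mulnC.
Qed.

Lemma W_scale N g : W (scaleV N g) = N * W g.
Proof. by rewrite /W big_distrr; apply: eq_bigr => i _; rewrite /scaleV -mulnA. Qed.

Hypothesis boxI : boxed I d.

(* Goodness forces every monomial of I to have weight at least D: the minimal
   generators below g^(D+1) lie in boxes B_a with |a| = D. *)
Lemma weight_gen g : I g -> prodd <= W g.
Proof.
move=> Ig; have [z [Hz Hzg]] := exists_mingen (powI_scale prodd.+1 Ig).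
have [a [Ha Hbox]] := boxI (ltn0Sn _) Hz.
have Haz : leV (muV d a) z by move=> i; case/andP: (Hbox i).
have := W_le (leV_trans Haz Hzg); rewrite W_mu W_scale Ha /=; nia.
Qed.

Lemma weight_powI L y : powI I L y -> L * prodd <= W y.
Proof.
elim: L y => [//|L IH] y [x [z [Ix [Iz Hle]]]].
by have := W_le Hle; rewrite W_add mulSn; have := weight_gen Ix; have := IH _ Iz; lia.
Qed.

End Weight.

Section Step.
Variable n : nat.
Variable I : expv n -> Prop.
Variable d : expv n.
Hypothesis d_pos : forall i, 0 < d i.
Hypothesis I_mu : forall i, I (powV i (d i)).
Hypothesis boxI : boxed I d.
Implicit Types (a b c m z : expv n) (i p : 'I_n).

Lemma addV_powV i k m q : addV (powV i k) m q = m q + (q == i) * k.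
Proof. by rewrite /addV /powV; case: (q == i) => /=; lia. Qed.

(* mu^b is a minimal element of I^|b|: anything of I^|b| below it has at
   least its weight, hence equals it. *)
Lemma mu_minimal b z : powI I (sumV b) z -> leV z (muV d b) -> leV (muV d b) z.
Proof.
move=> Iz Hzb; apply: NNPP => /not_leV [k Hk].
have := W_ltn d_pos Hzb Hk; have := weight_powI boxI Iz.
by rewrite W_mu mulnC; lia.
Qed.

Lemma mingen_corner a m p : mingen (powI I (sumV a).+1) m -> inbox d a m ->
  (a p).+1 * d p <= m p -> leV m (muV d (addV a (unitV p))).
Proof.
move=> [_ Hmin] Hbox Hp; apply: Hmin.
  by rewrite -(sumV_addunit a p); apply: powI_mu.
move=> q; rewrite /muV /addV /unitV; case: (eqVneq q p) => [->|_] /=.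
  by rewrite addn1.
by rewrite addn0; case/andP: (Hbox q).
Qed.

(* By goodness z lies in a box B_b with |b| = |a| + 1;
   either b = a + e_i, or z exceeds the box B_a in some direction p, which
   forces m to be the corner mu^(a+e_p) and z to be the corner mu^(a+e_i+e_p)
   (by minimality of mu^b in I^|b|). *)
Lemma mingen_step_corner a i m z :
  mingen (powI I (sumV a).+1) m -> inbox d a m ->
  mingen (powI I (sumV a).+2) z -> leV z (addV (powV i (d i)) m) ->
  leV (muV d (addV a (unitV i))) z.
Proof.
move=> Hm Hbox Hz Hzx; set c := addV a (unitV i).
have Hc : sumV c = (sumV a).+1 := sumV_addunit a i.
have [b [Hb Hboxz]] := boxI (ltn0Sn _) Hz; rewrite /= -Hc in Hb.
have Hx q := addV_powV i (d i) m q.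
have [Hbc|/not_leV [p Hp]] := classic (leV b c).
  have Hcb := leV_sumV_eq Hbc (eq_leq (esym Hb)).
  by move=> q; case/andP: (Hboxz q) => Hq _; apply: leq_trans Hq; rewrite leq_mul2r Hcb orbT.
have Hmp : (a p).+1 * d p <= m p.
  case/andP: (Hboxz p) => Hzp _; have := Hzx p; rewrite Hx.
  move: Hp Hzp; rewrite /c /addV /unitV; case: (eqVneq p i) => [->|_] /=; nia.
have Hm_corner := mingen_corner Hm Hbox Hmp.
suff Hz_corner : leV (muV d (addV c (unitV p))) z.
  by move=> q; apply: leq_trans (Hz_corner q); rewrite /muV /addV leq_mul2r leq_addr orbT.
apply: mu_minimal; first by rewrite sumV_addunit Hc; case: Hz.
move=> q; apply: leq_trans (Hzx q) _; rewrite Hx; have := Hm_corner q.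
rewrite /c /muV /addV /unitV; case: (eqVneq q i) => [->|_]; case: eqVneq => _ /=; nia.
Qed.

(* I_a is contained in I_(a + e_i): a generator m / mu^a of I_a, m in B_a,
   yields the generator z / mu^(a+e_i) of I_(a+e_i) dividing it, where z is a
   minimal generator of I^(|a|+2) dividing x_i^(d_i) m. *)
Lemma Ia_step a i t : Ia I d a t -> Ia I d (addV a (unitV i)) t.
Proof.
case=> m [Hbox [Hm Hmt]].
have [z [Hz Hzx]] := exists_mingen (powI_mul (I_mu i) Hm.1).
have Hcz := mingen_step_corner Hm Hbox Hz Hzx.
have Hx q := addV_powV i (d i) m q.
exists z; split; last split.
- move=> q; rewrite Hcz /=; apply: leq_trans (Hzx q) _; rewrite Hx.
  case/andP: (Hbox q) => _; rewrite /addV /unitV; case: (eqVneq q i) => [->|_] /=; nia.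
- by rewrite sumV_addunit.
- move=> q; apply: leq_trans (Hmt q); have := Hzx q; have := Hcz q; rewrite Hx.
  rewrite /muV /addV /unitV; case: (eqVneq q i) => [->|_] /=; nia.
Qed.

Lemma Ia_mono a b t : leV a b -> Ia I d a t -> Ia I d b t.
Proof.
by move=> Hab; apply: (leV_ind (P := fun a => Ia I d a t)) Hab => a' p; apply: Ia_step.
Qed.

End Step.

Lemma Ia_trunc n (I : expv n -> Prop) (d a t : expv n) :
  Ia I d a t <-> Ia I d a (fun i => minn (t i) (d i)).
Proof.
split; case=> m [Hb [Hm Hle]]; exists m; split=> //; split=> // i.
- by have := Hle i; case/andP: (Hb i) => _; rewrite mulSn; lia.
- by apply: leq_trans (Hle i) _; apply: geq_minl.
Qed.

Lemma finite_bound (T : finType) (R : T -> nat -> Prop) :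
  (forall t, exists k, R t k) -> (forall t k k', k <= k' -> R t k -> R t k') ->
  exists K, forall t, R t K.
Proof.
move=> Hex Hup.
suff [K HK] : exists K, forall t, t \in enum T -> R t K.
  by exists K => t; apply: HK; rewrite mem_enum.
elim: (enum T) => [|t s [K HK]]; first by exists 0.
have [k Hk] := Hex t; exists (maxn K k) => u; rewrite inE => /predU1P [->|/HK].
- by apply: Hup Hk; apply: leq_maxr.
- by apply: Hup; apply: leq_maxl.
Qed.

Section Dickson.
Variable n : nat.
Implicit Types (a b x : expv n) (p : 'I_n) (S : {set 'I_n}) (P Q : expv n -> Prop).

Definition boundV B (u : {ffun 'I_n -> 'I_B.+1}) : expv n := fun i => u i.

Lemma boundV_inj B : injective (@boundV B).
Proof.
move=> u u' Huu'; apply/ffunP => i; apply: val_inj.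
by have := congr1 (fun f => f i) Huu'.
Qed.

Lemma boundV_onto B x :
  (forall i, x i <= B) -> exists u : {ffun 'I_n -> 'I_B.+1}, boundV u = x.
Proof.
move=> HB; exists [ffun i => inord (x i)].
by apply: functional_extensionality => i; rewrite /boundV ffunE inordK // ltnS.
Qed.

Lemma leV_clampM x M M' : M <= M' -> leV (clampV x M) (clampV x M').
Proof. by move=> HM i; rewrite /clampV; lia. Qed.

Definition updV x p k : expv n := fun j => if j == p then k else x j.

Definition up_closed P : Prop := forall a b, leV a b -> P a -> P b.

Definition supported S P : Prop :=
  forall a b, (forall i, i \in S -> a i = b i) -> P a -> P b.

Definition clamp_stable P : Prop := exists M, forall a, P a -> P (clampV a M).

Lemma leV_updV a b p k k' : leV a b -> k <= k' -> leV (updV a p k) (updV b p k').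
Proof. by move=> Hab Hk j; rewrite /updV; case: eqP. Qed.

Lemma updV_id a p : updV a p (a p) = a.
Proof. by apply: functional_extensionality => j; rewrite /updV; case: eqP => [->|]. Qed.

Lemma slice_up_closed P p k : up_closed P -> up_closed (fun a => P (updV a p k)).
Proof. by move=> HP a b Hab; apply: HP; apply: leV_updV. Qed.

Lemma slice_supported S P p k :
  supported S P -> supported (S :\ p) (fun a => P (updV a p k)).
Proof.
move=> HP a b Hab; apply: HP => j Hj; rewrite /updV; case: eqP => // /eqP Hjp.
by apply: Hab; rewrite !inE Hjp.
Qed.

(* The projection
   Q a := exists k, P (a with a_p := k) is clamp stable; over the finitely many
   clamped points a single value K of the p-th coordinate witnesses Q, and each
   of the finitely many slices k < K is clamp stable on its own. *)
Lemma clamp_stable_step S p P :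
  (forall Q, up_closed Q -> supported (S :\ p) Q -> clamp_stable Q) ->
  up_closed P -> supported S P -> clamp_stable P.
Proof.
move=> IH Hup Hsupp.
pose Q a := exists k, P (updV a p k).
have [MQ HMQ] : clamp_stable Q.
  apply: IH.
  - by move=> a b Hab [k Hk]; exists k; exact: (slice_up_closed Hup Hab Hk).
  - by move=> a b Hab [k Hk]; exists k; exact: (slice_supported Hsupp Hab Hk).
have [K HK] : exists K, forall u : {ffun 'I_n -> 'I_MQ.+1},
    Q (boundV u) -> P (updV (boundV u) p K).
  apply: (finite_bound (R := fun u k => Q (boundV u) -> P (updV (boundV u) p k))).
  - move=> u; case: (classic (Q (boundV u))) => [[k Hk]|HnQ].
    + by exists k.
    + by exists 0.
  - by move=> u k k' Hk HPk /HPk; apply: Hup; apply: leV_updV.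
have HPK a : Q a -> P (updV (clampV a MQ) p K).
  move=> /HMQ HQa; have [u Hu] := @boundV_onto MQ (clampV a MQ) (fun i => geq_minr _ _).
  by rewrite -Hu in HQa *; apply: HK.
have [Ms HMs] : exists Ms, forall (k : 'I_K.+1) a,
    P (updV a p k) -> P (updV (clampV a Ms) p k).
  apply: (finite_bound (R := fun (k : 'I_K.+1) M => forall a,
    P (updV a p k) -> P (updV (clampV a M) p k))).
  - by move=> k; apply: IH; [apply: slice_up_closed | apply: slice_supported].
  - move=> k M M' HM HPM a /HPM; apply: Hup.
    by apply: leV_updV => //; apply: leV_clampM.
exists (maxn (maxn MQ K) Ms) => a Pa; case: (ltnP (a p) K) => HaK.
- have := HMs (Ordinal (ltnW HaK : a p < K.+1)) a; rewrite /= updV_id => /(_ Pa) HPa.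
  by apply: Hup HPa => j; rewrite /updV /clampV; case: eqP => [->|_]; lia.
- have Qa : Q a by exists (a p); rewrite updV_id.
  by apply: Hup (HPK a Qa) => j; rewrite /updV /clampV; case: eqP => [->|_]; lia.
Qed.

Lemma clamp_stable_supported S P : up_closed P -> supported S P -> clamp_stable P.
Proof.
move: {2}#|S| (erefl #|S|) => N; elim: N S P => [|N IH] S P HS Hup Hsupp.
  by exists 0 => a; apply: Hsupp => i; rewrite (cards0_eq HS) inE.
have [p Hp] : exists p, p \in S by apply/set0Pn; rewrite -card_gt0 HS.
apply: (clamp_stable_step (p := p) _ Hup Hsupp) => Q HQup HQsupp.
by apply: (IH (S :\ p)) => //; move: HS; rewrite (cardsD1 p S) Hp add1n => -[].
Qed.

(* Dickson's lemma in the form needed here: every upward closed set of points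
   of N^n is stable under truncation of the coordinates at a uniform level. *)
Lemma dickson_clamp P : up_closed P -> clamp_stable P.
Proof.
move=> Hup; apply: (clamp_stable_supported (S := setT)) => // a b Hab.
by have -> : a = b by apply: functional_extensionality => i; apply: Hab; rewrite inE.
Qed.

End Dickson.

(* For a good ideal the map a |-> I_a factors through truncation at a uniform
   level M: monotonicity and Dickson's lemma stabilise each of the finitely many
   relevant memberships t in I_a (t in the box [0, d]). *)
Lemma Ia_clamp n (I : expv n -> Prop) (d : expv n) :
  good I d -> exists M, forall a t, Ia I d a t <-> Ia I d (clampV a M) t.
Proof.
case=> _ [Hgen boxI].
have d_pos i : 0 < d i by case: (Hgen i).
have I_mu i : I (powV i (d i)) by case: (Hgen i) => _ [].
have Ia_up t : up_closed (fun a => Ia I d a t).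
  by move=> a b Hab; apply: Ia_mono.
have [M HM] : exists M, forall (u : {ffun 'I_n -> 'I_(sumV d).+1}) a,
    Ia I d a (boundV u) -> Ia I d (clampV a M) (boundV u).
  apply: (finite_bound (R := fun u M => forall a,
    Ia I d a (boundV u) -> Ia I d (clampV a M) (boundV u))).
  - by move=> u; apply: dickson_clamp.
  - by move=> u M M' HM HPM a /HPM; apply: Ia_up; apply: leV_clampM.
exists M => a t; split; last exact: Ia_up (leV_clamp a M).
rewrite Ia_trunc [Ia _ _ (clampV _ _) _]Ia_trunc.
have [u <-] := @boundV_onto _ (sumV d) (fun i => minn (t i) (d i))
  (fun i => leq_trans (geq_minr _ _) (leq_sumV d i)).
exact: HM.
Qed.

Lemma cone_clampV n M (u : {ffun 'I_n -> 'I_M.+1}) (c : expv n) :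
  cone (boundV u) [set i | u i < M] c <-> clampV c M = boundV u.
Proof.
have HuM i : u i <= M by rewrite -ltnS.
split=> [Hc|Hcu i].
- apply: functional_extensionality => i; have [Hin Hout] := Hc i.
  move: Hin Hout; rewrite /clampV /boundV inE.
  by case: ltnP => Hu Hin Hout; [rewrite Hin //; lia | have := HuM i; have := Hout isT; lia].
- have := congr1 (fun f => f i) Hcu; rewrite /clampV /boundV inE => Hmin.
  by split=> Hu; have := HuM i; lia.
Qed.

Lemma clamp_cone_decomposition n M (F : expv n -> expv n -> Prop) :
  (forall a c, F a c <-> F (clampV a M) c) ->
  exists (k : nat) (v : 'I_k -> expv n) (S : 'I_k -> {set 'I_n}),
    (forall j j' : 'I_k, j <> j' ->
       forall c, ~ (cone (v j) (S j) c /\ cone (v j') (S j') c)) /\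
    (forall c : expv n, exists j : 'I_k, cone (v j) (S j) c) /\
    (forall (j : 'I_k) (a b : expv n), cone (v j) (S j) a -> cone (v j) (S j) b ->
       forall c, F a c <-> F b c).
Proof.
move=> HF; pose T := {ffun 'I_n -> 'I_M.+1}.
exists #|T|, (fun j => boundV (@enum_val T _ j)),
  (fun j => [set i | @enum_val T _ j i < M]).
split; last split.
- move=> j j' Hjj' c [/cone_clampV Hc /cone_clampV Hc']; apply: Hjj'.
  by apply: enum_val_inj; apply: boundV_inj; rewrite -Hc -Hc'.
- move=> c; have [u Hu] := @boundV_onto _ M (clampV c M) (fun i => geq_minr _ _).
  by exists (enum_rank u); apply/cone_clampV; rewrite enum_rankK.
- move=> j a b /cone_clampV Ha /cone_clampV Hb c.
  by rewrite HF [F b c]HF Ha Hb.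
Qed.

Theorem mainTheorem8 (n : nat) (I : expv n -> Prop) (d : expv n) :
  good I d ->
  exists (k : nat) (v : 'I_k -> expv n) (S : 'I_k -> {set 'I_n}),
    (forall j j' : 'I_k, j <> j' ->
       forall c, ~ (cone (v j) (S j) c /\ cone (v j') (S j') c)) /\
    (forall c : expv n, exists j : 'I_k, cone (v j) (S j) c) /\
    (forall (j : 'I_k) (a b : expv n), cone (v j) (S j) a -> cone (v j) (S j) b ->
       forall c, Ia I d a c <-> Ia I d b c).
Proof.
move=> goodI; have [M HM] := Ia_clamp goodI.
exact: clamp_cone_decomposition HM.
Qed.
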